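(* A category $S$ is conical if and only if its universal monoid $\mathrm{U_{mon}}(S)$ is conical.
   Context: Categories are arrow-only: a set $S$ with a partial associative multiplication, set of identities $\mathrm{Id}\,S$, and each $x$ has source and target identities. $S$ is conical if, whenever $xy$ is defined and belongs to $\mathrm{Id}\,S$, then $x\in\mathrm{Id}\,S$ (equivalently $y\in\mathrm{Id}\,S$); for a monoid this means $xy=1$ implies $x=y=1$. $\mathrm{U_{mon}}(S)$ is the monoid presented by generators $\varepsilon_S(x)$ ($x\in S$) and relations $\varepsilon_S(e)=1$ ($e\in\mathrm{Id}\,S$), $\varepsilon_S(x)\varepsilon_S(y)=\varepsilon_S(xy)$ whenever $xy$ is defined. *)

From Stdlib Require Import List.
Import ListNotations.
Set Implicit Arguments.

(* Arrow-only categories: a set S with a partial associative multiplication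
   (mul x y = Some z means "xy is defined and equals z"), a set of identities
   Id S, and source / target maps d, r.  Convention: xy is defined iff
   d x = r y (composition written right to left). *)
Record Category (S : Type) := {
  mul : S -> S -> option S;
  isId : S -> Prop;
  dom : S -> S;
  cod : S -> S;
  dom_id : forall x, isId (dom x);
  cod_id : forall x, isId (cod x);
  id_dom : forall e, isId e -> dom e = e;
  id_cod : forall e, isId e -> cod e = e;
  mul_defined : forall x y, (exists z, mul x y = Some z) <-> dom x = cod y;
  mul_dom : forall x y z, mul x y = Some z -> dom z = dom y;
  mul_cod : forall x y z, mul x y = Some z -> cod z = cod x;
  mul_dom_r : forall x, mul x (dom x) = Some x;
  mul_cod_l : forall x, mul (cod x) x = Some x;
  mul_assoc : forall x y z xy yz,
      mul x y = Some xy -> mul y z = Some yz ->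
      exists w, mul xy z = Some w /\ mul x yz = Some w
}.

Definition conical (S : Type) (C : Category S) : Prop :=
  forall x y z, mul C x y = Some z -> isId C z -> isId C x /\ isId C y.

(* The universal monoid U_mon(S), presented by generators eps(x), x in S, and
   relations eps(e) = 1 (e in Id S), eps(x) eps(y) = eps(xy) whenever xy is
   defined.  Concretely: the free monoid on S (words = lists, product = ++,
   unit = [] , eps x = [x]) modulo the congruence generated by the relations. *)
Inductive umon_eq (S : Type) (C : Category S) : list S -> list S -> Prop :=
  | ue_id : forall e, isId C e -> umon_eq C [e] []
  | ue_mul : forall x y z, mul C x y = Some z -> umon_eq C [x; y] [z]
  | ue_refl : forall u, umon_eq C u u
  | ue_sym : forall u v, umon_eq C u v -> umon_eq C v u
  | ue_trans : forall u v w, umon_eq C u v -> umon_eq C v w -> umon_eq C u w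
  | ue_app : forall u u' v v', umon_eq C u u' -> umon_eq C v v' ->
                               umon_eq C (u ++ v) (u' ++ v').

Definition Umon_conical (S : Type) (C : Category S) : Prop :=
  forall u v : list S, umon_eq C (u ++ v) [] -> umon_eq C u [] /\ umon_eq C v [].

(* If S is conical, "every letter is an identity" is invariant under the
   defining congruence of U_mon(S), so a factorisation of the empty word has
   only identity letters.  Conversely, words with no identity letter and no two
   adjacent composable letters are normal forms: inserting a letter in front of
   such a word and reducing defines an action of words that respects the
   defining relations.  Hence eps(a) = 1 forces a to be an identity, and
   xy = e in Id S gives eps(x) eps(y) = 1, so x and y are identities. *)

From Stdlib Require Import List ClassicalEpsilon.
Import ListNotations.
Set Implicit Arguments.

Section Category_lemmas.
Variables (S : Type) (C : Category S).

Lemma mul_id_r {x e w} : isId C e -> mul C x e = Some w -> w = x.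
Proof.
  intros He Hxe.
  assert (Hd : dom C x = cod C e) by (apply (mul_defined C); eauto).
  rewrite (id_cod C e He) in Hd; subst e.
  rewrite (mul_dom_r C x) in Hxe; congruence.
Qed.

Lemma mul_id_l {e x w} : isId C e -> mul C e x = Some w -> w = x.
Proof.
  intros He Hex.
  assert (Hd : dom C e = cod C x) by (apply (mul_defined C); eauto).
  rewrite (id_dom C e He) in Hd; subst e.
  rewrite (mul_cod_l C x) in Hex; congruence.
Qed.

Lemma mul_none_dom_eq {a b c} :
  dom C a = dom C b -> mul C b c = None -> mul C a c = None.
Proof.
  intros Hab Hbc. destruct (mul C a c) as [ac|] eqn:Hac; auto.
  assert (Hd : dom C a = cod C c) by (apply (mul_defined C); eauto).
  assert (Hdef : exists bc, mul C b c = Some bc) by (apply (mul_defined C); congruence).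
  destruct Hdef; congruence.
Qed.

End Category_lemmas.

Section Identity_words.
Variables (S : Type) (C : Category S).

Lemma Forall_id_umon_eq_nil u : Forall (isId C) u -> umon_eq C u [].
Proof.
  induction 1 as [|x u Hx _ IH]; [apply ue_refl|].
  change (x :: u) with ([x] ++ u). change (@nil S) with (@nil S ++ []).
  apply ue_app; [apply ue_id|]; assumption.
Qed.

Lemma umon_eq_Forall_id (Hc : conical C) u v :
  umon_eq C u v -> (Forall (isId C) u <-> Forall (isId C) v).
Proof.
  induction 1 as [e He|x y z Hxyz| | | |u u' v v' _ IHu _ IHv]; try tauto.
  - split; auto.
  - split; intros Hid.
    + inversion Hid as [|? ? Hx Hy]; inversion Hy as [|? ? Hy' _]; subst.
      rewrite (mul_id_r C Hy' Hxyz); auto.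
    + inversion Hid; subst. destruct (Hc x y z); auto.
  - rewrite !Forall_app; tauto.
Qed.

End Identity_words.

Section Normal_forms.
Variables (S : Type) (C : Category S).

Definition is_id_dec (s : S) : {isId C s} + {~ isId C s} :=
  excluded_middle_informative _.

Definition cons_nonid (s : S) (w : list S) : list S :=
  if is_id_dec s then w else s :: w.

Definition head_blocked (s : S) (w : list S) : Prop :=
  match w with [] => True | t :: _ => mul C s t = None end.

Fixpoint reduced (w : list S) : Prop :=
  match w with
  | [] => True
  | t :: w' => ~ isId C t /\ head_blocked t w' /\ reduced w'
  end.

(* Identity letters are
   dropped only through [cons_nonid]: on a reduced word an identity either
   composes trivially with the head or does not compose at all. *)
Definition ins (s : S) (w : list S) : list S :=
  match w with
  | t :: w' => match mul C s t with
               | Some st => cons_nonid st w'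
               | None => cons_nonid s w
               end
  | [] => cons_nonid s w
  end.

Definition act (u w : list S) : list S := fold_right ins w u.

Lemma cons_nonid_id s w : isId C s -> cons_nonid s w = w.
Proof. intros Hs. unfold cons_nonid. destruct (is_id_dec s); tauto. Qed.

Lemma cons_nonid_nonid s w : ~ isId C s -> cons_nonid s w = s :: w.
Proof. intros Hs. unfold cons_nonid. destruct (is_id_dec s); tauto. Qed.

Lemma head_blocked_dom_eq a b w :
  dom C a = dom C b -> head_blocked b w -> head_blocked a w.
Proof. destruct w; simpl; eauto using mul_none_dom_eq. Qed.

Lemma reduced_cons_nonid s w :
  head_blocked s w -> reduced w -> reduced (cons_nonid s w).
Proof.
  intros Hb Hw. unfold cons_nonid. destruct (is_id_dec s); simpl; auto.
Qed.

Lemma ins_reduced s w : reduced w -> reduced (ins s w).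
Proof.
  intros Hw. destruct w as [|t w']; simpl.
  - apply reduced_cons_nonid; simpl; auto.
  - destruct (mul C s t) as [st|] eqn:Hst; destruct Hw as (Ht & Hb & Hw').
    + apply reduced_cons_nonid; auto.
      apply head_blocked_dom_eq with t; eauto using mul_dom.
    + apply reduced_cons_nonid; simpl; auto.
Qed.

Lemma act_reduced u w : reduced w -> reduced (act u w).
Proof. induction u; simpl; auto using ins_reduced. Qed.

Lemma act_app u v w : act (u ++ v) w = act u (act v w).
Proof. apply fold_right_app. Qed.

Lemma ins_id {e w} : isId C e -> reduced w -> ins e w = w.
Proof.
  intros He Hw. destruct w as [|t w']; simpl; [apply cons_nonid_id; auto|].
  destruct Hw as (Ht & _ & _).
  destruct (mul C e t) as [et|] eqn:Het.
  - rewrite (mul_id_l C He Het). apply cons_nonid_nonid; auto.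
  - apply cons_nonid_id; auto.
Qed.

(* The composite [yt] is an identity, so [x] has the same domain as [t]
   and is blocked by the rest of the word exactly as [t] was. *)
Lemma ins_ins_cancel x y t w z yt :
  mul C x y = Some z -> mul C y t = Some yt -> isId C yt ->
  reduced (t :: w) -> ins x w = ins z (t :: w).
Proof.
  intros Hxy Hyt Hid (_ & Hb & _).
  destruct (mul_assoc C x y t Hxy Hyt) as (v & Hzt & Hxyt).
  rewrite (mul_id_r C Hid Hxyt) in Hzt.
  assert (Hdom : dom C x = dom C t).
  { rewrite ((proj1 (mul_defined C x y)) (ex_intro _ z Hxy)).
    rewrite <- (mul_cod C y t Hyt), <- (mul_dom C y t Hyt).
    rewrite (id_cod C yt Hid), (id_dom C yt Hid); reflexivity. }
  simpl. rewrite Hzt.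
  destruct w as [|t' w']; simpl; [reflexivity|].
  simpl in Hb. rewrite (mul_none_dom_eq C Hdom Hb). reflexivity.
Qed.

Lemma ins_ins_mul x y z w :
  mul C x y = Some z -> reduced w -> ins x (ins y w) = ins z w.
Proof.
  intros Hxy Hw.
  destruct (is_id_dec y) as [Hy|Hy].
  { rewrite (ins_id Hy Hw), (mul_id_r C Hy Hxy); reflexivity. }
  destruct w as [|t w'].
  { simpl. rewrite cons_nonid_nonid by assumption. simpl. rewrite Hxy; reflexivity. }
  simpl ins at 2.
  destruct (mul C y t) as [yt|] eqn:Hyt.
  - destruct (is_id_dec yt) as [Hid|Hnid].
    + rewrite cons_nonid_id by assumption. eapply ins_ins_cancel; eauto.
    + rewrite cons_nonid_nonid by assumption.
      destruct (mul_assoc C x y t Hxy Hyt) as (v & Hzt & Hxyt).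
      simpl. rewrite Hxyt, Hzt; reflexivity.
  - rewrite cons_nonid_nonid by assumption. simpl. rewrite Hxy.
    rewrite (mul_none_dom_eq C (mul_dom C x y Hxy) Hyt); reflexivity.
Qed.

Lemma umon_eq_act u v : umon_eq C u v -> forall w, reduced w -> act u w = act v w.
Proof.
  induction 1 as [e He|x y z Hxyz| |u v _ IH|u v w' _ IH1 _ IH2
                 |u u' v v' _ IHu _ IHv]; intros w Hw; simpl.
  - apply ins_id; auto.
  - apply ins_ins_mul; auto.
  - reflexivity.
  - symmetry; auto.
  - rewrite IH1; auto.
  - rewrite !act_app, IHv by assumption. apply IHu, act_reduced; assumption.
Qed.

Lemma umon_eq_letter_nil a : umon_eq C [a] [] -> isId C a.
Proof.
  intros Ha. pose proof (umon_eq_act Ha [] I) as Hact.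
  simpl in Hact. unfold cons_nonid in Hact.
  destruct (is_id_dec a); [assumption|discriminate].
Qed.

End Normal_forms.

Theorem proposition4p1 (S : Type) (C : Category S) :
  conical C <-> Umon_conical C.
Proof.
  split.
  - intros Hc u v Huv.
    apply (umon_eq_Forall_id Hc) in Huv.
    destruct (Forall_app (isId C) u v) as [Hsplit _].
    destruct (Hsplit (proj2 Huv (Forall_nil _))) as [Hu Hv].
    split; apply Forall_id_umon_eq_nil; assumption.
  - intros Hu x y z Hxy Hz.
    assert (Hxy_nil : umon_eq C ([x] ++ [y]) []).
    { apply ue_trans with [z]; [apply ue_mul | apply ue_id]; assumption. }
    destruct (Hu _ _ Hxy_nil) as [Hx Hy].
    split; apply umon_eq_letter_nil; assumption.
Qed.
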